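(* Let $E$ be a complex vector space of dimension $2$, let $f,g$ be linear endomorphisms of $E$, and let $\mathcal{U}=\{u\in\mathbb{C}\setminus\{0\} : e^u=1+u\}$. Then the following are equivalent: (i) $f\circ g\neq g\circ f$ and for every $t\in\mathbb{C}$, $\exp(tf+g)=\exp(tf)\circ\exp(g)$; (ii) there exist $\sigma,\tau\in\mathbb{C}$ such that $\tilde f=f-\sigma\,\mathrm{id}$ and $\tilde g=g-\tau\,\mathrm{id}$ satisfy $\tilde f\neq 0$, $\tilde f^2=0$, $\tilde f\circ\tilde g=0$ and $\mathrm{tr}(\tilde g)\in\mathcal{U}$.
   Context: $\mathrm{id}$ is the identity of $E$, $\mathrm{tr}$ the trace, and $\exp(u)=\sum_{k\ge0}u^k/k!$ for a linear endomorphism $u$. *)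

From HB Require Import structures.
From mathcomp Require Import all_boot all_order all_algebra.
From mathcomp Require Export complex.
From mathcomp Require Import all_classical all_reals all_analysis.
Import Order.TTheory GRing.Theory Num.Theory.
Import numFieldNormedType.Exports.
Local Open Scope ring_scope.
Local Open Scope complex_scope.

Set Implicit Arguments.
Unset Strict Implicit.
Unset Printing Implicit Defensive.

Definition cexp (R : realType) (u : R[i]) : R[i] :=
  limn (series (fun k => ((k`!%:R)^-1 * u ^+ k : R[i]^o))).

(* exp(A) = sum_{k>=0} A^k / k!  for a linear endomorphism of E = C^2,
   represented by its 2x2 complex matrix (limit in the normed space 'M_2). *)
Definition mexp (R : realType) (A : 'M[R[i]]_2) : 'M[R[i]]_2 :=
  limn (series (fun k => (k`!%:R)^-1 *: A ^+ k)).

Definition Uset (R : realType) (u : R[i]) : Prop :=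
  u != 0 /\ cexp u = 1 + u.

From HB Require Import structures.
From mathcomp Require Import all_boot all_order all_algebra.
From mathcomp Require Import complex.
From mathcomp Require Import all_classical all_reals all_analysis.
From mathcomp Require Import ring.
Import Order.TTheory GRing.Theory Num.Theory.
Import numFieldNormedType.Exports.
Local Open Scope classical_set_scope.
Local Open Scope ring_scope.
Local Open Scope complex_scope.

(* Every 2x2 complex matrix is l + N with N^2 = d N, and then
   exp(l + N) = e^l (1 + phi(d) N) with phi(d) = (e^d - 1)/d; in particular exp A
   lies in the span of 1 and A.  If exp(tf + g) = exp(tf) exp(g) while fg <> gf, then
   1, f, g are linearly independent, and comparing exp(tf) exp(g) with exp(tf + g)
   puts fg in the span of 1, f, g; hence (f - sigma)(g - tau) is a scalar, which must
   vanish since otherwise the two factors would commute.  For F = f - sigma and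
   G = g - tau one then has F^2 = s F, G^2 = u G, and comparing coordinates gives
   phi(ts) = phi(u) for all t <> 0.  As phi is not constant, s = 0, and
   phi(u) = phi(0) = 1 says e^u = 1 + u.  Conversely these relations give
   (tF + G)^2 = u (tF + G), which makes all three exponentials explicit. *)

Section ExpPartialSums.
Context {K : numFieldType}.

Definition exp_psum (x : K) n := \sum_(0 <= k < n) (k`!%:R)^-1 * x ^+ k.

Let term (a b : K) i j := (i`!%:R)^-1 * a ^+ i * ((j`!%:R)^-1 * b ^+ j).

Lemma exp_coefD (a b : K) n :
  (n`!%:R)^-1 * (a + b) ^+ n = \sum_(0 <= i < n.+1) term a b i (n - i).
Proof.
rewrite big_nat_rev /= big_mkord exprDn big_distrr /=.
apply: eq_bigr => [[i /=]]; rewrite ltnS => lein _.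
rewrite add0n subSS subKn // /term mulrnAr -mulr_natl mulrA.
have fact_neq0 k : (k`!%:R : K) != 0 by rewrite pnatr_eq0 -lt0n fact_gt0.
have bin_neq0 : ('C(n, i)%:R : K) != 0 by rewrite pnatr_eq0 -lt0n bin_gt0.
have -> : 'C(n, i)%:R / n`!%:R = ((n - i)`!%:R)^-1 * (i`!%:R)^-1 :> K.
  rewrite -(bin_fact lein) !natrM; field.
  by rewrite fact_neq0 fact_neq0 bin_neq0.
by rewrite -!mulrA; congr (_ * _); rewrite mulrCA.
Qed.

Lemma exp_psumD (a b : K) n :
  exp_psum (a + b) n = \sum_(0 <= i < n) \sum_(0 <= j < n - i) term a b i j.
Proof.
elim: n => [|n IH]; first by rewrite /exp_psum !big_geq.
rewrite /exp_psum big_nat_recr //= -/(exp_psum (a + b) n) IH exp_coefD.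
rewrite [in RHS]big_nat_recr //= subSnn big_nat1.
rewrite [X in _ + X]big_nat_recr //= subnn addrA; congr (_ + _).
rewrite -big_split /=; apply: eq_big_nat => i /andP[_ lin].
by rewrite subSn ?(ltnW lin) // big_nat_recr.
Qed.

Lemma exp_psum_mul_sub (a b : K) n :
  exp_psum a n * exp_psum b n - exp_psum (a + b) n =
  \sum_(0 <= i < n) \sum_(n - i <= j < n) term a b i j.
Proof.
rewrite exp_psumD /exp_psum big_distrl -sumrB; apply: eq_big_nat => i /andP[_ lin].
rewrite big_distrr (@big_cat_nat _ _ _ (n - i) 0 n) ?leq_subr //=.
by rewrite addrAC subrr add0r.
Qed.

Lemma norm_exp_psum_mul_sub (a b : K) n :
  `|exp_psum a n * exp_psum b n - exp_psum (a + b) n| <=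
  exp_psum `|a| n * exp_psum `|b| n - exp_psum (`|a| + `|b|) n.
Proof.
rewrite !exp_psum_mul_sub; apply: le_trans (ler_norm_sum _ _ _) _.
apply: ler_sum => i _; apply: le_trans (ler_norm_sum _ _ _) _.
apply: ler_sum => j _.
by rewrite /term !normrM !normrX !normfV !normr_nat.
Qed.

End ExpPartialSums.

Section ComplexExp.
Context {R : realType}.
Import ComplexField.Normc.
Local Notation C := R[i]^o.
Implicit Types (u v : C).

Lemma normc_real (x : R) : `|x%:C| = `|x|%:C :> R[i].
Proof. by rewrite normc_def /= expr0n addr0 sqrtr_sqr. Qed.

Lemma cvg_real_complex {x : nat -> R} {a : R} :
  x @ \oo --> a -> (fun n => (x n)%:C : C) @ \oo --> (a%:C : C).
Proof.
move=> /cvgrPdist_lt xa; apply/cvgrPdist_lt => e /[dup] e0.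
rewrite ltcE /= => /andP[/eqP eIm eRe].
have -> : e = (complex.Re e)%:C by case: e eIm {e0 eRe} => ? ? /= ->.
near=> n; rewrite -rmorphB normc_real ltcR.
by near: n; exact: xa.
Unshelve. all: by end_near. Qed.

Lemma normc_exp_coef u k : normc ((k`!%:R)^-1 * u ^+ k) = exp_coeff (normc u) k.
Proof.
rewrite /exp_coeff /= normcM normcV normcMn normc1 mulrC; congr (_ * _).
by elim: k => [|k IH]; rewrite ?normc1 // !exprS normcM IH.
Qed.

Let cvgn_exp_psum_component {p : {additive R[i] -> R}} u :
  (forall z, `|p z| <= normc z) -> cvgn (fun n => p (exp_psum u n)).
Proof.
move=> p_le; have -> : (fun n => p (exp_psum u n)) =
    series (fun k => p ((k`!%:R)^-1 * u ^+ k)) by apply/funext => n; exact: raddf_sum.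
apply: normed_cvg; apply: (series_le_cvg _ _ _ (is_cvg_series_exp_coeff (normc u))).
- by move=> k; exact: normr_ge0.
- by move=> k; apply: exp_coeff_ge0; case: (u : R[i]) => ? ?; exact: sqrtr_ge0.
- by move=> k; rewrite -normc_exp_coef; exact: p_le.
Qed.

Lemma cvg_cexp u : exp_psum u @ \oo --> (cexp u : C).
Proof.
(* [R[i]] carries no complete normed structure, so convergence is obtained from the
   real and imaginary parts, each dominated by the real exponential series of [|u|]. *)
have Re_le (z : R[i]) : `|complex.Re z| <= normc z.
  by case: z => a b; rewrite -sqrtr_sqr ler_wsqrtr // lerDl sqr_ge0.
have Im_le (z : R[i]) : `|complex.Im z| <= normc z.
  by case: z => a b; rewrite -sqrtr_sqr ler_wsqrtr // lerDr sqr_ge0.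
suff : cvgn (exp_psum u) by [].
have -> : exp_psum u = fun n => (complex.Re (exp_psum u n))%:C +
    'i *: (complex.Im (exp_psum u n))%:C :> C.
  by apply/funext => n; exact: complexE.
apply/cvg_ex; eexists; apply: cvgD; first exact: cvg_real_complex (cvgn_exp_psum_component u Re_le).
apply: cvgZ (cvg_cst _) _; exact: cvg_real_complex (cvgn_exp_psum_component u Im_le).
Qed.

Lemma normc_complex (z : R[i]) : `|z| = (normc z)%:C.
Proof. by rewrite normc_def; case: z. Qed.

Lemma cexp_lim u (l : C) : exp_psum u @ \oo --> l -> cexp u = l :> C.
Proof. exact: cvg_unique _ (cvg_cexp u). Qed.

Lemma exp_psum_real (x : R) n : exp_psum (x%:C : R[i]) n = (exp_psum x n)%:C.
Proof.
rewrite /exp_psum rmorph_sum; apply: eq_bigr => k _.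
by rewrite rmorphM rmorphXn fmorphV rmorph_nat.
Qed.

Lemma cvg_exp_psum_real (x : R) : exp_psum x @ \oo --> expR x.
Proof.
suff -> : exp_psum x = series (exp_coeff x) by exact: is_cvg_series_exp_coeff.
by apply/funext => n; apply: eq_bigr => k _; rewrite /exp_coeff /= mulrC.
Qed.

Lemma cexp_real (x : R) : cexp x%:C = (expR x)%:C.
Proof.
apply: cexp_lim; rewrite (funext (exp_psum_real x)).
exact: cvg_real_complex (cvg_exp_psum_real x).
Qed.

Lemma cvg_real_norm_le0 {r : nat -> R} {z : nat -> C} :
  r @ \oo --> 0 -> (forall n, `|z n| <= (r n)%:C) -> z @ \oo --> 0.
Proof.
move=> /cvg_real_complex; rewrite rmorph0 => r0 zr; apply/cvgr0Pnorm_le => e e0.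
move: r0 => /cvgr0_norm_le /(_ e e0); apply: filterS => n rn_le.
by apply: le_trans (zr n) (le_trans _ rn_le); rewrite normc_real lecR ler_norm.
Qed.

Lemma cexpD u v : cexp (u + v) = cexp u * cexp v.
Proof.
pose a := normc u; pose b := normc v.
pose r n := exp_psum a n * exp_psum b n - exp_psum (a + b) n.
have r0 : r @ \oo --> 0.
  rewrite -(subrr (expR (a + b))) [X in X - _]expRD.
  exact: cvgB (cvgM (cvg_exp_psum_real a) (cvg_exp_psum_real b)) (cvg_exp_psum_real _).
have err0 : (fun n => exp_psum u n * exp_psum v n - exp_psum (u + v) n : C) @ \oo --> (0 : C).
  apply: (cvg_real_norm_le0 r0) => n; apply: le_trans (norm_exp_psum_mul_sub u v n) _.
  by rewrite !normc_complex -rmorphD !exp_psum_real -rmorphM -rmorphB.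
apply: cexp_lim; rewrite -[cexp u * cexp v]subr0.
have -> : exp_psum (u + v) = fun n =>
    exp_psum u n * exp_psum v n - (exp_psum u n * exp_psum v n - exp_psum (u + v) n).
  by apply/funext => n; rewrite subKr.
exact: cvgB (cvgM (cvg_cexp u) (cvg_cexp v)) err0.
Qed.

Lemma cexp0 : cexp (0 : R[i]) = 1.
Proof. by rewrite -[0 : R[i]]/((0 : R)%:C) cexp_real expR0. Qed.

Lemma cexp_neq0 u : cexp u != 0.
Proof.
apply/eqP => eu0; have := cexpD u (- u).
by rewrite subrr cexp0 eu0 mul0r => /eqP; rewrite oner_eq0.
Qed.

Lemma cexp1_neq1 : cexp (1 : R[i]) != 1.
Proof.
rewrite -[1 : R[i]]/((1 : R)%:C) cexp_real.
by apply/eqP => /complexI /eqP; rewrite gt_eqF // pexpR_gt1.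
Qed.

Definition cexprel (z : R[i]) : R[i] := if z == 0 then 1 else (cexp z - 1) / z.

Lemma cexprel0 : cexprel 0 = 1.
Proof. by rewrite /cexprel eqxx. Qed.

Lemma cexprel_neq0 z : z != 0 -> cexprel z = (cexp z - 1) / z.
Proof. by rewrite /cexprel => /negPf ->. Qed.

Lemma cexprel_neq0_exists (d : R[i]) : exists2 t, t != 0 & cexprel (t * d) != 0.
Proof.
have [->|d_neq0] := eqVneq d 0.
  by exists 1; [exact: oner_neq0 | rewrite mulr0 cexprel0 oner_neq0].
exists d^-1; first by rewrite invr_eq0.
by rewrite mulVf // cexprel_neq0 ?oner_neq0 // divr1 subr_eq0 cexp1_neq1.
Qed.

Lemma cexprel_Uset {u : R[i]} : Uset u -> cexprel u = 1.
Proof. by case=> u_neq0 eu; rewrite cexprel_neq0 // eu addrC addKr divff. Qed.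

Lemma cexprel_nonconst : exists2 z : R[i], z != 0 & cexprel z != cexprel 1.
Proof.
have two_neq0 : 1 + 1 != 0 :> R[i] by rewrite -[1 + 1]/(2%:R) pnatr_eq0.
exists (1 + 1) => //.
rewrite (cexprel_neq0 _ (oner_neq0 _)) divr1 (cexprel_neq0 _ two_neq0) cexpD.
have := cexp1_neq1; apply: contra_neq; move: (cexp 1) => e.
move=> /(congr1 ( *%R^~ (1 + 1))); rewrite /= divfK // => e2.
have : (e - 1) ^+ 2 = 0.
  have -> : (e - 1) ^+ 2 = e * e - 1 - (e - 1) * (1 + 1) by ring.
  by rewrite e2 subrr.
by move/eqP; rewrite expf_eq0 /= subr_eq0 => /eqP.
Qed.

End ComplexExp.

Section DetMulEq0.
Context {K : fieldType}.

Lemma det_eq0_of_mulmx_eq0l {m n} {A : 'M[K]_n} {B : 'M[K]_(n, m)} :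
  A *m B = 0 -> B != 0 -> \det A = 0.
Proof.
move=> AB0; apply: contraNeq => detA_neq0.
have : (\det A)%:M *m B = 0 by rewrite -mul_adj_mx -mulmxA AB0 mulmx0.
by rewrite mul_scalar_mx => /eqP; rewrite scaler_eq0 (negPf detA_neq0).
Qed.

Lemma det_eq0_of_mulmx_eq0r {m n} {A : 'M[K]_(m, n)} {B : 'M[K]_n} :
  A *m B = 0 -> A != 0 -> \det B = 0.
Proof.
move=> AB0; apply: contraNeq => detB_neq0.
have : A *m (\det B)%:M = 0 by rewrite -mul_mx_adj mulmxA AB0 mul0mx.
by rewrite mul_mx_scalar => /eqP; rewrite scaler_eq0 (negPf detB_neq0).
Qed.

End DetMulEq0.

Section NoncommutingMatrices.
Context {K : fieldType} {n : nat}.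
Implicit Types P Q : 'M[K]_n.+1.

Lemma commr_scalar P a : GRing.comm P a%:M.
Proof. exact: comm_mx_scalar. Qed.

Lemma commr_add_scalar {P Q} a b : GRing.comm P Q -> GRing.comm (a%:M + P) (b%:M + Q).
Proof.
move=> PQ; apply: commrD; first exact: commr_scalar.
by apply/commr_sym/commrD; [exact: commr_scalar | exact: commr_sym].
Qed.

Lemma commr_affine P a b : GRing.comm P (a%:M + b *: P).
Proof.
apply: commrD; first exact: commr_scalar.
by rewrite /GRing.comm -scalerAl -scalerAr.
Qed.

Lemma scalar_affineB P Q a b c a' b' c' :
  (a%:M + b *: P + c *: Q) - (a'%:M + b' *: P + c' *: Q) =
  (a - a')%:M + (b - b') *: P + (c - c') *: Q.
Proof.
rewrite !opprD addrACA -scalerBl; congr (_ + _).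
by rewrite addrACA -scalerBl raddfB.
Qed.

Lemma scalar_affine_eq0 {P Q} {a b c : K} : P * Q != Q * P ->
  a%:M + b *: P + c *: Q = 0 -> [/\ a = 0, b = 0 & c = 0].
Proof.
move=> PQ_neq abc0.
have c0 : c = 0.
  apply: contraNeq PQ_neq => c_neq0.
  have cQ : c *: Q = - (a%:M + b *: P) by apply/eqP; rewrite -addr_eq0 addrC abc0.
  have : GRing.comm P (c *: Q) by rewrite cQ; apply/commrN/commr_affine.
  by rewrite /GRing.comm -scalerAl -scalerAr => /(scalerI c_neq0) ->.
move: abc0; rewrite c0 scale0r addr0 => ab0.
have b0 : b = 0.
  apply: contraNeq PQ_neq => b_neq0.
  have bP : b *: P = - a%:M by apply/eqP; rewrite -addr_eq0 addrC ab0.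
  have : GRing.comm (b *: P) Q by rewrite bP; apply/commr_sym/commrN/commr_scalar.
  by rewrite /GRing.comm -scalerAl -scalerAr => /(scalerI b_neq0) ->.
move: ab0; rewrite b0 scale0r addr0 => /matrixP/(_ 0 0).
by rewrite !mxE.
Qed.

Lemma scalar_affine_inj {P Q} {a b c a' b' c' : K} : P * Q != Q * P ->
  a%:M + b *: P + c *: Q = a'%:M + b' *: P + c' *: Q -> [/\ a = a', b = b' & c = c'].
Proof.
move=> PQ_neq /eqP; rewrite -subr_eq0 scalar_affineB => /eqP /(scalar_affine_eq0 PQ_neq).
by case=> /eqP + /eqP + /eqP; rewrite !subr_eq0 => /eqP -> /eqP -> /eqP ->.
Qed.

Lemma mulmx_scalarC {P Q} {k : K} : k != 0 -> P * Q = k%:M -> Q * P = k%:M.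
Proof.
move=> k_neq0 PQk.
have : (k^-1 *: P) *m Q = 1%:M by rewrite mulmxE -scalerAl PQk scale_scalar_mx mulVf.
move/mulmx1C; rewrite mulmxE -scalerAr => /(congr1 ( *:%R k)).
by rewrite scalerA divff // scale1r scalemx1.
Qed.

Lemma mul_sub_scalar P Q y z :
  (P - z%:M) * (Q - y%:M) = P * Q - y *: P - z *: Q + (z * y)%:M.
Proof.
rewrite mulrBl !mulrBr -!mulmxE mul_mx_scalar !mul_scalar_mx scale_scalar_mx.
by rewrite opprD opprK addrA.
Qed.

Lemma mul_sub_scalar_eq0 {P Q} {x y z : K} : P * Q != Q * P ->
  P * Q = x%:M + y *: P + z *: Q -> (P - z%:M) * (Q - y%:M) = 0.
Proof.
move=> PQ_neq PQ_affine.
have PQ_scalar : (P - z%:M) * (Q - y%:M) = (x + z * y)%:M.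
  by rewrite mul_sub_scalar PQ_affine (addrAC _ (y *: P)) !addrK raddfD.
have [k0|k_neq0] := eqVneq (x + z * y) 0; first by rewrite PQ_scalar k0 raddf0.
have QP_scalar := mulmx_scalarC k_neq0 PQ_scalar.
move/negP: PQ_neq; case; apply/eqP.
rewrite -[P](subrKC z%:M) -[Q](subrKC y%:M); apply: commr_add_scalar.
by rewrite /GRing.comm PQ_scalar QP_scalar.
Qed.

Lemma mul_affine_shift_eq0 {P Q} {a b t p q : K} : P * Q != Q * P -> p != 0 ->
  (1 + p *: P) * (1 + q *: Q) = a%:M + b *: (t *: P + Q) ->
  exists y z, (P - z%:M) * (Q - y%:M) = 0.
Proof.
move=> PQ_neq p_neq0.
have -> : (1 + p *: P) * (1 + q *: Q) = 1%:M + p *: P + q *: Q + (p * q) *: (P * Q).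
  by rewrite mulrDl !mulrDr !mul1r mulr1 -scalerAl -scalerAr scalerA !addrA (addrAC 1).
rewrite scalerDr scalerA addrA => E.
have [q0|q_neq0] := eqVneq q 0.
  have E0 : 1%:M + p *: P + 0 *: Q = a%:M + (b * t) *: P + b *: Q.
    by rewrite scale0r addr0 -E q0 mulr0 !scale0r !addr0.
  have [_ pbt b0] := scalar_affine_inj PQ_neq E0.
  by move: p_neq0; rewrite pbt -b0 mul0r eqxx.
have pq_neq0 : p * q != 0 by rewrite mulf_neq0.
have pqPQ : (p * q) *: (P * Q) = (a - 1)%:M + (b * t - p) *: P + (b - q) *: Q.
  by rewrite -scalar_affineB -E addrC addKr.
exists ((p * q)^-1 * (b * t - p)), ((p * q)^-1 * (b - q)).
apply: (mul_sub_scalar_eq0 PQ_neq (x := (p * q)^-1 * (a - 1))).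
apply: (scalerI pq_neq0); rewrite pqPQ !scalerDr scale_scalar_mx !scalerA.
by rewrite !mulrA divff // !mul1r.
Qed.

Lemma commr_sub_scalar P Q a b : GRing.comm (P - a%:M) (Q - b%:M) <-> GRing.comm P Q.
Proof.
split=> [/(commr_add_scalar a b)|/(commr_add_scalar (- a) (- b))]; first by rewrite !subrKC.
by rewrite !raddfN ![- _ + _]addrC.
Qed.

End NoncommutingMatrices.

Section Mx2.
Context {K : comNzRingType}.
Implicit Types A B : 'M[K]_2.

Lemma ord2P (i : 'I_2) : i = 0 \/ i = 1.
Proof. by case: i => [[|[|//]]] ?; [left|right]; apply: val_inj. Qed.

Lemma mx2_mulE A B i j : (A * B) i j = A i 0 * B 0 j + A i 1 * B 1 j.
Proof.
rewrite -mulmxE mxE !big_ord_recl big_ord0 addr0.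
by rewrite (_ : lift 0 0 = 1 :> 'I_2) //; apply: val_inj.
Qed.

Lemma mx2_traceE A : \tr A = A 0 0 + A 1 1.
Proof.
rewrite /mxtrace !big_ord_recl big_ord0 addr0.
by rewrite (_ : lift 0 0 = 1 :> 'I_2) //; apply: val_inj.
Qed.

Lemma mx2_sqr A : A * A = \tr A *: A - (\det A)%:M.
Proof.
have := Cayley_Hamilton A.
have -> : char_poly A = 'X^2 - (\tr A) *: 'X + (\det A)%:P.
  have sz := size_char_poly A; have mon := char_poly_monic A.
  apply/polyP => -[|[|[|i]]]; rewrite !(coefD, coefN, coefZ, coefXn, coefX, coefC) /=.
  - by rewrite char_poly_det; ring.
  - by rewrite (char_poly_trace A) //; ring.
  - by rewrite -(monicP mon) /lead_coef sz; ring.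
  - by rewrite nth_default ?sz //; ring.
rewrite rmorphD rmorphB /= horner_mx_C linearZ /= horner_mx_X rmorphXn /= horner_mx_X.
by rewrite expr2 => /eqP; rewrite -addrA addr_eq0 opprD opprK => /eqP.
Qed.

Lemma mx2_mul_add_mul A B :
  A * B + B * A = \tr A *: B + \tr B *: A + (\tr (A * B) - \tr A * \tr B)%:M.
Proof.
apply/matrixP => i j; rewrite !(mx2_mulE, mx2_traceE, mxE).
by case: (ord2P i) (ord2P j) => -> [] ->; rewrite /= ?mulr1n ?mulr0n; ring.
Qed.

End Mx2.

Lemma mx2_scalar_shift_sqr {K : closedFieldType} (A : 'M[K]_2) :
  exists l, (A - l%:M) * (A - l%:M) = \tr (A - l%:M) *: (A - l%:M).
Proof.
have [l] : exists l, root (char_poly A) l by apply/closed_rootP; rewrite size_char_poly.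
rewrite -eigenvalue_root_char => /eigenvalueP [v vA v_neq0].
exists l; rewrite mx2_sqr (det_eq0_of_mulmx_eq0r _ v_neq0) ?raddf0 ?subr0 ?addr0 //.
by rewrite mulmxBr vA mul_mx_scalar subrr.
Qed.

Section PowerOfScalarAdd.
Context {K : comNzRingType} {A : algType K}.

Fixpoint divdiff_expr (l d : K) k :=
  if k is k'.+1 then l ^+ k' + (l + d) * divdiff_expr l d k' else 0.

Lemma exprD_alg_sqrZ {d : K} {N : A} (l : K) : N * N = d *: N ->
  forall k, (l%:A + N) ^+ k = (l ^+ k)%:A + divdiff_expr l d k *: N.
Proof.
move=> NN; elim=> [|k IH]; first by rewrite expr0 scale0r addr0 scale1r.
rewrite exprSr IH mulrDl !mulrDr -!scalerAl !mul1r -!scalerAr !mulr1 NN !scalerA.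
rewrite -addrA -exprSr; congr (_ + _).
by rewrite -!scalerDl; congr (_ *: _) => /=; ring.
Qed.

Lemma sqrZ_scale {d : K} {N : A} (t : K) : N * N = d *: N ->
  (t *: N) * (t *: N) = (t * d) *: (t *: N).
Proof. by move=> NN; rewrite -scalerAl -scalerAr NN !scalerA; congr (_ *: _); ring. Qed.

End PowerOfScalarAdd.

Section MatrixExp.
Context {R : realType}.
Local Notation C := R[i]^o.
Local Notation M2 := 'M[R[i]]_2.

Lemma divdiff_exprE (l d : R[i]) k : d != 0 ->
  divdiff_expr l d k = ((l + d) ^+ k - l ^+ k) / d.
Proof.
move=> d_neq0; elim: k => [|k IH] /=; first by rewrite !expr0 subrr mul0r.
by rewrite IH !exprS; field.
Qed.

Lemma divdiff_expr0 (l : R[i]) k : divdiff_expr l 0 k.+1 = k.+1%:R * l ^+ k.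
Proof.
elim: k => [|k IH]; first by rewrite /= mulr0 addr0 mul1r.
rewrite -[LHS]/(l ^+ k.+1 + (l + 0) * divdiff_expr l 0 k.+1) IH addr0.
by rewrite exprS -[in RHS]addn1 natrD; ring.
Qed.

Lemma cvg_exp_divdiff (l d : R[i]) :
  (fun n => \sum_(0 <= k < n) (k`!%:R)^-1 * divdiff_expr l d k : C) @ \oo -->
  (cexp l * cexprel d : C).
Proof.
have [->|d_neq0] := eqVneq d 0.
  rewrite cexprel0 mulr1 -cvg_shiftS.
  suff -> : (fun n => \sum_(0 <= k < n.+1) (k`!%:R)^-1 * divdiff_expr l 0 k : C) = exp_psum l.
    exact: cvg_cexp.
  apply/funext => n; rewrite big_nat_recl // [X in X + _]/= mulr0 add0r.
  apply: eq_bigr => k _; rewrite divdiff_expr0 factS natrM; field.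
  by rewrite nat1r !pnatr_eq0 -lt0n fact_gt0.
rewrite cexprel_neq0 // mulrA mulrBr mulr1 -cexpD.
have -> : (fun n => \sum_(0 <= k < n) (k`!%:R)^-1 * divdiff_expr l d k : C) =
    fun n => (exp_psum (l + d) n - exp_psum l n) * d^-1.
  apply/funext => n; rewrite /exp_psum -sumrB big_distrl /=; apply: eq_bigr => k _.
  by rewrite divdiff_exprE // mulrA mulrBr.
exact: cvgMr_tmp (cvgB (cvg_cexp _) (cvg_cexp _)).
Qed.

Lemma mexp_scalar_add {d : R[i]} {N : M2} (l : R[i]) : N * N = d *: N ->
  mexp (l%:M + N) = cexp l *: (1 + cexprel d *: N).
Proof.
move=> NN; rewrite /mexp.
have -> : series (fun k => (k`!%:R)^-1 *: (l%:M + N) ^+ k) = fun n =>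
    exp_psum l n *: 1 + (\sum_(0 <= k < n) (k`!%:R)^-1 * divdiff_expr l d k) *: N.
  apply/funext => n; rewrite /exp_psum !scaler_suml -big_split /=.
  apply: eq_bigr => k _; rewrite -scalemx1 (exprD_alg_sqrZ _ NN).
  by rewrite scalerDr !scalerA.
apply: (cvg_lim (@norm_hausdorff _ M2)).
rewrite scalerDr scalerA; apply: cvgD; apply: cvgZr_tmp; first exact: cvg_cexp.
exact: cvg_exp_divdiff.
Qed.

Lemma mexp_sqrZ {d : R[i]} {N : M2} : N * N = d *: N -> mexp N = 1 + cexprel d *: N.
Proof. by move=> NN; have := mexp_scalar_add 0 NN; rewrite raddf0 add0r cexp0 scale1r. Qed.

Lemma mexp_sub_scalar_sqr {A : M2} {l d : R[i]} :
  (A - l%:M) * (A - l%:M) = d *: (A - l%:M) ->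
  mexp A = cexp l *: (1 + cexprel d *: (A - l%:M)).
Proof. by move=> NN; rewrite -(mexp_scalar_add l NN) subrKC. Qed.

Lemma mexp_add_scalar (c : R[i]) (A : M2) : mexp (c%:M + A) = cexp c *: mexp A.
Proof.
have [l NN] := mx2_scalar_shift_sqr A.
rewrite -[A](subrKC l%:M) addrA -raddfD !(mexp_scalar_add _ NN) cexpD.
by rewrite scalerA.
Qed.

Lemma mexp_affine (A : M2) : exists a b, mexp A = a%:M + b *: A.
Proof.
have [l NN] := mx2_scalar_shift_sqr A; rewrite (mexp_sub_scalar_sqr NN).
set e := cexp l; set p := cexprel _.
exists (e * (1 - p * l)), (e * p).
rewrite -[1 : M2]/(1%:M) scalerDr scalerA scalerBr !scale_scalar_mx mulr1.
by rewrite mulrBr mulr1 mulrA raddfB addrCA addrC.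
Qed.

End MatrixExp.

Section ExpSplitting.
Context {R : realType}.
Local Notation M2 := 'M[R[i]]_2.
Implicit Types f g F G : M2.

Definition exp_splits f g := forall t : R[i], mexp (t *: f + g) = mexp (t *: f) * mexp g.

Lemma exp_splits_add_scalar {f g} a b : exp_splits f g -> exp_splits (a%:M + f) (b%:M + g).
Proof.
move=> fg_split t.
have -> : t *: (a%:M + f) + (b%:M + g) = (t * a + b)%:M + (t *: f + g).
  by rewrite scalerDr scale_scalar_mx addrACA raddfD.
rewrite scalerDr scale_scalar_mx !mexp_add_scalar fg_split cexpD.
by rewrite -scalerAl -scalerAr scalerA.
Qed.

Lemma exp_splits_sub_scalar f g a b : exp_splits (f - a%:M) (g - b%:M) <-> exp_splits f g.
Proof.
split=> [/(exp_splits_add_scalar a b)|/(exp_splits_add_scalar (- a) (- b))].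
  by rewrite !subrKC.
by rewrite !raddfN ![- _ + _]addrC.
Qed.

Lemma exp_splits_mul_shift_eq0 {f g} : f * g != g * f -> exp_splits f g ->
  exists sigma tau, (f - sigma%:M) * (g - tau%:M) = 0.
Proof.
move=> fg_neq fg_split.
have [l NN] := mx2_scalar_shift_sqr f; set N := f - l%:M in NN; set d := \tr N in NN.
have [l' NN'] := mx2_scalar_shift_sqr g; set N' := g - l'%:M in NN'; set d' := \tr N' in NN'.
have f_eq : f = l%:M + N by rewrite subrKC.
have g_eq : g = l'%:M + N' by rewrite subrKC.
have NN'_neq : N * N' != N' * N by apply: contra_neq fg_neq => /commr_sub_scalar.
have [t t_neq0 p_neq0] := cexprel_neq0_exists d.
have exp_tf : mexp (t *: f) = cexp (t * l) *: (1 + (cexprel (t * d) * t) *: N).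
  by rewrite f_eq scalerDr scale_scalar_mx (mexp_scalar_add _ (sqrZ_scale t NN)) scalerA.
have exp_g : mexp g = cexp l' *: (1 + cexprel d' *: N') by rewrite g_eq (mexp_scalar_add _ NN').
have [a [b exp_tfg]] := mexp_affine (t *: f + g).
have e_neq0 : cexp (t * l) * cexp l' != 0 by rewrite mulf_neq0 ?cexp_neq0.
have key : (1 + (cexprel (t * d) * t) *: N) * (1 + cexprel d' *: N') =
    ((cexp (t * l) * cexp l')^-1 * (a + b * (t * l + l')))%:M +
    ((cexp (t * l) * cexp l')^-1 * b) *: (t *: N + N').
  have prod : (cexp (t * l) * cexp l') *:
      ((1 + (cexprel (t * d) * t) *: N) * (1 + cexprel d' *: N')) = mexp (t *: f + g).
    by rewrite fg_split exp_tf exp_g -scalerAl -scalerAr scalerA.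
  have tfg : t *: f + g = (t * l + l')%:M + (t *: N + N').
    by rewrite f_eq g_eq scalerDr scale_scalar_mx addrACA -raddfD.
  apply: (scalerI e_neq0); rewrite prod exp_tfg tfg.
  move: (t *: N + N') (t * l + l') => W c.
  rewrite !scalerDr !scale_scalar_mx !scalerA !mulrA divff // !mul1r.
  by rewrite addrA -raddfD.
have [y [z NN'0]] := mul_affine_shift_eq0 NN'_neq (mulf_neq0 p_neq0 t_neq0) key.
by exists (l + z), (l' + y); rewrite !raddfD !addrA.
Qed.

Lemma exp_splits_mul_eq0 {F G} : F * G = 0 -> F * G != G * F -> exp_splits F G ->
  F * F = 0 /\ Uset (\tr G).
Proof.
move=> FG0 FG_neq FG_split.
have F_neq0 : F != 0 by apply: contraNneq FG_neq => ->; rewrite mul0r mulr0.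
have G_neq0 : G != 0 by apply: contraNneq FG_neq => ->; rewrite mul0r mulr0.
set s := \tr F; set u := \tr G.
have FF : F * F = s *: F by rewrite mx2_sqr (det_eq0_of_mulmx_eq0l FG0 G_neq0) raddf0 subr0.
have GG : G * G = u *: G by rewrite mx2_sqr (det_eq0_of_mulmx_eq0r FG0 F_neq0) raddf0 subr0.
have p_const t : t != 0 -> cexprel (t * s) = cexprel u.
  move=> t_neq0; have [a [b exp_tFG]] := mexp_affine (t *: F + G).
  move: (FG_split t); rewrite exp_tFG (mexp_sqrZ (sqrZ_scale t FF)) (mexp_sqrZ GG).
  rewrite mulrDl !mulrDr !mul1r mulr1 -!scalerAl -scalerAr FG0 !scaler0 addr0.
  rewrite scalerDr !scalerA addrA (addrAC 1) -[1 : M2]/(1%:M).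
  move/(scalar_affine_inj FG_neq) => [_ bt pu].
  by apply: (mulIf t_neq0); rewrite -bt pu.
have s0 : s = 0.
  have [z z_neq0] := @cexprel_nonconst R; apply: contraNeq => s_neq0; apply/eqP.
  have pz := p_const (z / s); rewrite divfK // in pz.
  have p1 := p_const s^-1; rewrite mulVf // in p1.
  by rewrite pz ?p1 ?mulf_neq0 ?invr_eq0.
have u_neq0 : u != 0.
  apply: contraNneq FG_neq => u0; apply/eqP.
  have := mx2_mul_add_mul F G; rewrite FG0 add0r mxtrace0 -/s -/u s0 u0.
  by rewrite !scale0r mul0r subr0 raddf0 !addr0 => ->.
split; first by rewrite FF s0 scale0r.
split => //; have := p_const 1 (oner_neq0 _).
rewrite mul1r s0 cexprel0 (cexprel_neq0 _ u_neq0) => /esym /(congr1 ( *%R^~ u)).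
by rewrite divfK // mul1r => /eqP; rewrite subr_eq addrC => /eqP.
Qed.

Lemma mul_eq0_exp_splits {F G} : F != 0 -> F * F = 0 -> F * G = 0 -> Uset (\tr G) ->
  F * G != G * F /\ exp_splits F G.
Proof.
move=> F_neq0 FF FG0 Uu; set u := \tr G in Uu.
have u_neq0 : u != 0 by case: Uu.
have trF0 : \tr F = 0.
  have := mx2_sqr F; rewrite FF (det_eq0_of_mulmx_eq0l FF F_neq0) raddf0 subr0 => /esym/eqP.
  by rewrite scaler_eq0 (negPf F_neq0) orbF => /eqP.
have GF : G * F = u *: F.
  have := mx2_mul_add_mul F G; rewrite FG0 add0r mxtrace0 trF0 scale0r add0r mul0r.
  by rewrite oppr0 raddf0 addr0 add0r.
have GG : G * G = u *: G by rewrite mx2_sqr (det_eq0_of_mulmx_eq0r FG0 F_neq0) raddf0 subr0.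
split; first by rewrite FG0 GF eq_sym scaler_eq0 negb_or u_neq0 F_neq0.
move=> t.
have tFF : (t *: F) * (t *: F) = 0 *: (t *: F) by rewrite -scalerAl -scalerAr FF !scaler0 scale0r.
have tFG : (t *: F + G) * (t *: F + G) = u *: (t *: F + G).
  rewrite mulrDl !mulrDr -!scalerAl -!scalerAr FF FG0 GF GG !scaler0 !add0r.
  by rewrite scalerDr !scalerA mulrC.
rewrite (mexp_sqrZ tFG) (mexp_sqrZ tFF) (mexp_sqrZ GG) cexprel0 (cexprel_Uset Uu) !scale1r.
by rewrite mulrDl !mulrDr !mul1r mulr1 -scalerAl FG0 scaler0 addr0 addrA addrAC.
Qed.

End ExpSplitting.

Theorem theorem2 (R : realType) (f g : 'M[R[i]]_2) :
  (f *m g != g *m f /\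
   forall t : R[i], mexp (t *: f + g) = mexp (t *: f) *m mexp g)
  <->
  (exists sigma tau : R[i],
     let ft := f - sigma%:M in
     let gt := g - tau%:M in
     [/\ ft != 0, ft *m ft = 0, ft *m gt = 0 & Uset (\tr gt)]).
Proof.
split=> [[fg_neq fg_split]|[sigma [tau [F_neq0 FF FG0 Uu]]]].
  have [sigma [tau FG0]] := exp_splits_mul_shift_eq0 fg_neq fg_split.
  have FG_neq : (f - sigma%:M) * (g - tau%:M) != (g - tau%:M) * (f - sigma%:M).
    by apply: contra_neq fg_neq => /commr_sub_scalar.
  have FG_split := (exp_splits_sub_scalar f g sigma tau).2 fg_split.
  have [FF Uu] := exp_splits_mul_eq0 FG0 FG_neq FG_split.
  exists sigma, tau; split => //.
  by apply: contraNneq FG_neq => ->; rewrite mul0r mulr0.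
have [FG_neq FG_split] := mul_eq0_exp_splits F_neq0 FF FG0 Uu.
split; last exact: (exp_splits_sub_scalar f g sigma tau).1 FG_split.
by rewrite mulmxE; apply: contra_neq FG_neq => /commr_sub_scalar; apply.
Qed.
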